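(* Consider a proof-of-work blockchain using the tie-breaking rule based on partial PoW described in the context, adopted by all honest miners. Suppose an attacker performs a Match against post-generated block. Then, on average, the proportion $\gamma$ of honest miners (by hashrate) that mine on the attacker's chain satisfies $$\gamma \le 1 - \frac{1}{2}\exp\!\left(-\frac{2\Delta_B + 2\Delta_P}{T}\right).$$
   Context: Setting. $T$ is the average block generation interval of the whole network. A block header $h$ is a valid block if $H(h)<\mathit{Target}$, where $H$ is a cryptographic hash function. A partial PoW is a header with $H(h)<n\,\mathit{Target}$, where $n>1$ is a fixed difficulty adjuster. Miners publish partial PoWs when found. Every block reaches every miner less than $\Delta_B$ after publication, and every partial PoW less than $\Delta_P$ after publication. Clock drift among miners is negligible. The attacker can instantly learn of any published message and instantly deliver any message to any miner. Rule. A miner regards a valid partial PoW as sufficiently shared once $2\Delta_B$ has elapsed since its arrival at that miner. Each block contains a shared partial PoW, namely the XOR of the hashes of a set of partial PoWs. An honest miner uses for this set the valid partial PoWs for which $2\Delta_B+\Delta_P$ has elapsed since their arrival. The set is transmitted with the block. Chain ties. A chain tie occurs when the predefined fork choice rule (e.g. longest chain) does not give a unique chain. The arrival time of a chain is the arrival time of its head. A miner considers only the tied chains arriving within the acceptance window $w=\Delta_B$ of the earliest-arriving tied chain. For each such chain, the miner takes the union of the shared partial PoW sets of its blocks. The chain's weight is $-1$ if some member is not valid and sufficiently shared for that miner; otherwise it is the size of the union. The miner mines on a chain of maximum weight, breaking remaining ties uniformly at random. Attack. In a Match against post-generated block, the attacker withholds a block it generated and publishes it when an honest miner publishes a competing block,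 creating a chain tie. *)

From HB Require Import structures.
From mathcomp Require Import all_boot all_order all_algebra.
From mathcomp Require Import all_classical all_reals all_analysis.
Set Implicit Arguments. Unset Strict Implicit. Unset Printing Implicit Defensive.
Import Order.TTheory GRing.Theory Num.Theory.
Local Open Scope ring_scope.

(* One instance of the attack "Match against post-generated block".
   H : the honest miners, Q : the (candidate) partial PoWs.
   All times are real numbers on a common clock (clock drift negligible). *)
Record scenario (H Q : finType) (R : realType) := Scenario {
  t_att  : R;              (* generation time of the attacker's withheld block *)
  t_hon  : R;              (* generation time of the honest competing block    *)
  t_pub  : R;              (* publication time of the honest block; the
                              attacker publishes its block at the same time     *)
  gen    : H;              (* honest miner who generated the competing block   *)
  recvH  : H -> R;         (* arrival time of the honest block at each miner   *)
  recvA  : H -> R;         (* arrival time of the attacker's block             *)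
  ppub   : Q -> R;         (* publication time of each partial PoW             *)
  parr   : H -> Q -> R;    (* arrival time of each partial PoW at each miner   *)
  pvalid : Q -> bool;      (* validity of a partial PoW (H(h) < n Target)      *)
  S0     : {set Q};        (* union of shared-partial-PoW sets of the common prefix *)
  SA     : {set Q};        (* shared partial PoW set of the attacker's block   *)
  SH     : {set Q}         (* shared partial PoW set of the honest block       *)
}.

Section Model.
Variables (H Q : finType) (R : realType).
Implicit Types (s : scenario H Q R) (m : H) (p : Q).

(* the fork choice of miner m is made when the tie arises, i.e. when the
   second of the two tied chains arrives *)
Definition dec_time (s : scenario H Q R) m : R := Num.max (recvH s m) (recvA s m).

Definition suff_shared (DB : R) s m p : bool :=
  pvalid s p && (parr s m p + 2 * DB <= dec_time s m).

(* weight of a chain whose blocks' shared partial PoW sets have union S *)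
Definition chain_weight (DB : R) s m (S : {set Q}) : R :=
  if [forall p in S, suff_shared DB s m p] then (#|S|)%:R else -1.

(* probability (over the uniform tie-break) that honest miner m mines on the
   attacker's chain, with acceptance window w = DB *)
Definition pref_att (DB : R) s m : R :=
  if recvA s m + DB < recvH s m then 1        (* honest chain outside window *)
  else if recvH s m + DB < recvA s m then 0   (* attacker chain outside window *)
  else
    let wA := chain_weight DB s m (S0 s :|: SA s) in
    let wH := chain_weight DB s m (S0 s :|: SH s) in
    if wH < wA then 1 else if wA == wH then 2^-1 else 0.

(* expected proportion (by honest hashrate hr) of honest miners mining on the
   attacker's chain *)
Definition att_share (hr : H -> R) (DB : R) s : R :=
  \sum_m hr m * pref_att DB s m.

Definition honest_set (DB DP : R) s : {set Q} :=
  [set p | pvalid s p && (parr s (gen s) p + (2 * DB + DP) <= t_hon s)].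

Definition admissible (DB DP : R) s : Prop :=
  [/\ t_att s < t_hon s,                 (* post-generated honest block *)
      t_hon s <= t_pub s,
      (forall m, t_hon s <= recvH s m /\ recvH s m < t_pub s + DB) &
   [/\
      (forall m, t_pub s <= recvA s m /\ recvA s m < t_pub s + DB),
      (forall m p, ppub s p <= parr s m p /\ parr s m p < ppub s p + DP),
      SH s = honest_set DB DP s
    & (forall p, p \in SA s -> pvalid s p -> ppub s p <= t_att s)]].

End Model.

(* If the honest block is generated at least 2 DB + 2 DP after the withheld one,
   every valid partial PoW the attacker could use was published before its block,
   hence reached the honest generator early enough to be in the honest set: the
   attacker's chain can never outweigh the honest one, so each honest miner in the
   acceptance window prefers it with probability at most 1/2.  With exponentially
   distributed block intervals this favourable event has probability
   exp (- beta (2 DB + 2 DP) / T) >= exp (- (2 DB + 2 DP) / T), and on the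
   complementary event gamma is at most 1. *)

From HB Require Import structures.
From mathcomp Require Import all_boot all_order all_algebra.
From mathcomp Require Import ring lra.
From mathcomp Require Import all_classical all_reals all_analysis.
Set Implicit Arguments.
Unset Strict Implicit.
Unset Printing Implicit Defensive.

Import Order.TTheory GRing.Theory Num.Theory.
Local Open Scope ring_scope.
Local Open Scope classical_set_scope.

Lemma weighted_sum_le (I : finType) (R : numDomainType) (w f : I -> R) (c : R) :
  (forall i, 0 <= w i) -> \sum_i w i = 1 -> (forall i, f i <= c) ->
  \sum_i w i * f i <= c.
Proof.
move=> w_ge0 w_sum1 f_le; apply: (@le_trans _ _ (\sum_i w i * c)).
  by apply: ler_sum => i _; exact: ler_wpM2l.
by rewrite -mulr_suml w_sum1 mul1r.
Qed.

Section Preference.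
Variables (H Q : finType) (R : realType) (DB : R) (s : scenario H Q R).

Lemma pref_att_ge0 m : 0 <= pref_att DB s m.
Proof. by rewrite /pref_att; repeat case: ifP => _ //; lra. Qed.

Lemma pref_att_le1 m : pref_att DB s m <= 1.
Proof. by rewrite /pref_att; repeat case: ifP => _ //; lra. Qed.

Variable hr : H -> R.
Hypothesis hr_ge0 : forall m, 0 <= hr m.

Lemma att_share_ge0 : 0 <= att_share hr DB s.
Proof. by apply: sumr_ge0 => m _; rewrite mulr_ge0 ?pref_att_ge0. Qed.

Hypothesis hr_sum1 : \sum_m hr m = 1.

Lemma att_share_le1 : att_share hr DB s <= 1.
Proof. exact: weighted_sum_le pref_att_le1. Qed.

End Preference.

Section PostGenerated.
Variables (H Q : finType) (R : realType) (DB DP : R) (s : scenario H Q R).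
Hypothesis adm : admissible DB DP s.

Lemma honest_set_suff_shared m p :
  p \in honest_set DB DP s -> suff_shared DB s m p.
Proof.
have [_ _ recvH_bd [_ parr_bd _ _]] := adm.
rewrite inE => /andP[valid_p old_p]; rewrite /suff_shared valid_p /dec_time le_max.
have [pub_gen _] := parr_bd (gen s) p; have [_ arr_m] := parr_bd m p.
have [hon_m _] := recvH_bd m.
by apply/orP; left; lra.
Qed.

Hypothesis gap : 2 * DB + 2 * DP <= t_hon s - t_att s.

Lemma valid_att_mem_honest_set p :
  p \in SA s -> pvalid s p -> p \in honest_set DB DP s.
Proof.
have [_ _ _ [_ parr_bd _ SA_old]] := adm.
move=> pA valid_p; have pub_att := SA_old p pA valid_p.
have [_ arr_gen] := parr_bd (gen s) p.
by rewrite inE valid_p /=; move: gap; lra.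
Qed.

Lemma chain_weight_att_le_hon m :
  chain_weight DB s m (S0 s :|: SA s) <= chain_weight DB s m (S0 s :|: SH s).
Proof.
have [_ _ _ [_ _ SH_def _]] := adm.
rewrite /chain_weight; case: ifP => [att_shared|_]; last first.
  by case: ifP => _; rewrite ?lexx // (le_trans (lerN10 _)).
have shared_att p : p \in S0 s :|: SA s -> suff_shared DB s m p.
  by move=> p_att; move/forall_inP: att_shared; apply.
have sub : S0 s :|: SA s \subset S0 s :|: SH s.
  apply/fintype.subsetP => p p_att; have := p_att; rewrite !inE => /orP[->//|pA].
  have /andP[valid_p _] := shared_att p p_att.
  by rewrite SH_def valid_att_mem_honest_set ?orbT.
have -> : [forall p in S0 s :|: SH s, suff_shared DB s m p].
  apply/forall_inP => p; rewrite inE => /orP[p0|pH].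
    by apply: shared_att; rewrite inE p0.
  by apply: honest_set_suff_shared; rewrite -SH_def.
by rewrite ler_nat subset_leq_card.
Qed.

Lemma pref_att_le_half m : pref_att DB s m <= 2^-1.
Proof.
have [_ _ recvH_bd [recvA_bd _ _ _]] := adm.
have [_ hon_m] := recvH_bd m; have [att_m _] := recvA_bd m.
rewrite /pref_att; case: ifP => [|_]; first lra.
case: ifP => _; first lra.
rewrite ltNge chain_weight_att_le_hon /=.
by case: ifP => _; lra.
Qed.

Lemma att_share_le_half (hr : H -> R) :
  (forall m, 0 <= hr m) -> \sum_m hr m = 1 -> att_share hr DB s <= 2^-1.
Proof. by move=> hr_ge0 hr_sum1; exact: weighted_sum_le pref_att_le_half. Qed.

End PostGenerated.

Lemma integral_le_1_sub_indic (d : measure_display) (T : measurableType d)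
    (R : realType) (P : probability T R) (E : set T) (f : T -> R) (c p : R) :
  measurable E -> measurable_fun setT f -> P E = p%:E ->
  (forall x, 0 <= f x <= 1 - c * \1_E x) ->
  (\int[P]_x (f x)%:E <= (1 - c * p)%:E)%E.
Proof.
move=> mE mf PE f_bd.
have int_indic : P.-integrable setT (fun x => (\1_E x)%:E) by exact: integrable_indic.
apply: (@le_trans _ _ (\int[P]_x (1 - c * \1_E x)%:E)%E).
  apply: ge0_le_integral => //.
  - by move=> x _; rewrite lee_fin; case/andP: (f_bd x).
  - exact/measurable_realfun.measurable_EFinP.
  - apply/measurable_realfun.measurable_EFinP; apply: measurable_realfun.measurable_funB => //.
    by apply: measurable_realfun.measurable_funM => //; exact: measurable_realfun.measurable_indic.
  - by move=> x _; rewrite lee_fin; case/andP: (f_bd x).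
rewrite (eq_integral (fun x => (cst 1 x - c * \1_E x)%:E)) //.
rewrite integralB_EFin //; last 2 first.
- exact: finite_measure_integrable_cst.
- by under [X in _.-integrable _ X]eq_fun do rewrite /= EFinM; exact: integrableZl.
have -> : (\int[P]_x (cst 1 x)%:E = 1)%E.
  by rewrite (eq_integral (cst 1%E)) // integral_cst // mul1e; exact: probability_setT.
under eq_integral do rewrite EFinM.
rewrite integralZl //.
have -> : (\int[P]_x (\1_E x)%:E = p%:E)%E.
  by rewrite integral_indic // setIT; exact: PE.
by rewrite -EFinM -EFinB.
Qed.

Theorem lemma2 (R : realType) (d : measure_display) (Omega : measurableType d)
  (P : probability Omega R) (H Q : finType) (T DB DP beta : R)
  (hr : H -> R) (sc : Omega -> scenario H Q R) :
  0 < T -> 0 < DB -> 0 < DP -> 0 < beta <= 1 ->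
  (forall m, 0 <= hr m) -> \sum_m hr m = 1 ->
  (forall w, admissible DB DP (sc w)) ->
  measurable_fun setT (fun w => t_hon (sc w) - t_att (sc w)) ->
  (forall t, 0 <= t ->
     P [set w | t <= t_hon (sc w) - t_att (sc w)] = (expR (- (beta * t / T)))%:E) ->
  measurable_fun setT (fun w => att_share hr DB (sc w)) ->
  (\int[P]_w (att_share hr DB (sc w))%:E
     <= (1 - 2^-1 * expR (- ((2 * DB + 2 * DP) / T)))%:E)%E.
Proof.
move=> T_gt0 DB_gt0 DP_gt0 /andP[_ beta_le1] hr_ge0 hr_sum1 adm
  m_gap P_gap m_share.
set t0 := 2 * DB + 2 * DP; set E := [set w | t0 <= t_hon (sc w) - t_att (sc w)].
have mE : measurable E by rewrite /E -preimage_itvcy -[X in measurable X]setTI; exact: m_gap.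
have share_bd w : 0 <= att_share hr DB (sc w) <= 1 - 2^-1 * \1_E w.
  rewrite att_share_ge0 // indicE; have [/set_mem gap|_] := boolP (w \in E).
    by apply: le_trans (att_share_le_half (adm w) gap hr_ge0 hr_sum1) _; rewrite mulr1; lra.
  by rewrite mulr0 subr0 att_share_le1.
apply: le_trans (integral_le_1_sub_indic mE m_share (P_gap t0 _) share_bd) _.
  by rewrite /t0; lra.
rewrite lee_fin lerD2l lerN2 ler_pM2l ?invr_gt0 ?ltr0n // ler_expR lerN2.
by rewrite ler_pM2r ?invr_gt0 // ler_piMl // /t0; lra.
Qed.
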